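(* For every $\tau\in\Gamma_S^\infty$, every integer $R\ge1$ and every $x\in(0,1]$, $$P_\tau(x)\;\ge\;1-\frac1R-x\,|\bar{\mathcal B}_R|.$$
   Context: $\Gamma$ is the set of planar rooted, locally finite trees whose root $r$ has degree one; $\Gamma_S^\infty\subset\Gamma$ is the set of infinite trees with exactly one infinite non-backtracking path from $r$ (the spine), with spine vertices $s_1,s_2,\dots$ ordered away from $r$ (set $s_0=r$). $|G|$ is the number of edges of a graph $G$. For $i\ge1$, $\mathcal A^i$ is the component containing $s_i$ after deleting the spine edges $\{s_{i-1},s_i\},\{s_i,s_{i+1}\}$; the hull $\bar{\mathcal B}_R$ is the union of the spine path from $r$ to $s_R$ and $\mathcal A^1,\dots,\mathcal A^R$, so $|\bar{\mathcal B}_R|=R+\sum_{i=1}^R|\mathcal A^i|$. For simple random walk $\omega$ on $\tau$ started at $r$, $P_\tau(x)=\sum_{t\ge1}\mathbb P(\omega(t)=r,\ \omega(t')\ne r\text{ for }0<t'<t\mid \omega(0)=r)(1-x)^{t/2}$ is the generating function of first-return probabilities to the root. *)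

From Stdlib Require Import Reals List Lia.
Import ListNotations.
Open Scope R_scope.

(* Planar rooted locally finite trees, Ulam-Harris encoding.               *)
(* A tree is given by  ch : list nat -> nat,  the number of children of     *)
(* each vertex.  Vertices are lists of child indices written from the       *)
(* vertex back to the root (head = last step): the root r is [], the        *)
(* children of v are  i :: v  for i < ch v (ordered by i: planar order),    *)
(* and the parent of  i :: v  is  v.  Only lists reachable in this way are  *)
(* vertices of the tree; the walk below never leaves them.                  *)

Definition Tree := list nat -> nat.

Definition children (ch : Tree) (v : list nat) : list (list nat) :=
  map (fun i => i :: v) (seq 0 (ch v)).

Definition nbrs (ch : Tree) (v : list nat) : list (list nat) :=
  children ch v ++ match v with [] => [] | _ :: p => [p] end.

Definition deg (ch : Tree) (v : list nat) : nat :=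
  ch v + match v with [] => 0%nat | _ => 1%nat end.

Definition root_deg_one (ch : Tree) : Prop := deg ch [] = 1%nat.

(* An infinite non-backtracking path from r is a sequence of child choices  *)
(* s : nat -> nat; its n-th vertex is ray s n.                              *)
Fixpoint ray (s : nat -> nat) (n : nat) : list nat :=
  match n with
  | O => []
  | S m => s m :: ray s m
  end.

Definition is_ray (ch : Tree) (s : nat -> nat) : Prop :=
  forall n, (s n < ch (ray s n))%nat.

(* tau in Gamma_S^infty with spine sp: root of degree one, sp is an infinite *)
(* non-backtracking path from r, and it is the only one.                    *)
Definition spine_of (ch : Tree) (sp : nat -> nat) : Prop :=
  root_deg_one ch /\ is_ray ch sp /\
  (forall s', is_ray ch s' -> forall n, s' n = sp n).

(* Hull  bar B_R: the spine path r..s_R together with A^1,...,A^R, i.e.     *)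
(* all vertices except those in the subtree rooted at s_{R+1}.  It is a     *)
(* subtree, so |bar B_R| = (#vertices) - 1 = R + sum_i |A^i|.               *)

Fixpoint level (ch : Tree) (n : nat) : list (list nat) :=
  match n with
  | O => [ [] ]
  | S m => flat_map (children ch) (level ch m)
  end.

Definition in_subtree (v w : list nat) : bool :=
  if Nat.leb (length v) (length w) then
    if list_eq_dec Nat.eq_dec (skipn (length w - length v) w) v then true else false
  else false.

Definition in_hull (sp : nat -> nat) (Rr : nat) (w : list nat) : bool :=
  negb (in_subtree (ray sp (S Rr)) w).

Fixpoint hull_vertices_upto (ch : Tree) (sp : nat -> nat) (Rr d : nat) : nat :=
  match d with
  | O => length (filter (in_hull sp Rr) (level ch 0))
  | S e => (hull_vertices_upto ch sp Rr e
            + length (filter (in_hull sp Rr) (level ch (S e))))%nat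
  end.

(* |bar B_R| = N : the (eventually constant) number of vertices of the hull *)
(* minus one, i.e. its number of edges.                                     *)
Definition hull_edges_eq (ch : Tree) (sp : nat -> nat) (Rr N : nat) : Prop :=
  exists d0, forall d, (d0 <= d)%nat -> hull_vertices_upto ch sp Rr d = S N.

(* hit ch n u = P(walk started at u is at r at time n and not before).      *)

Definition sumR (l : list R) : R := fold_right Rplus 0 l.

Fixpoint hit (ch : Tree) (n : nat) (u : list nat) : R :=
  match n with
  | O => match u with [] => 1 | _ => 0 end
  | S m => match u with
           | [] => 0
           | _ => sumR (map (fun w => hit ch m w / INR (deg ch u)) (nbrs ch u))
           end
  end.

(* first return probability to r at time t (t >= 1), 0 for t = 0 *)
Definition first_return (ch : Tree) (t : nat) : R :=
  match t with
  | O => 0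
  | S m => sumR (map (fun w => hit ch m w / INR (deg ch [])) (nbrs ch []))
  end.

(* t-th term of P_tau(x) = sum_{t>=1} first_return t * (1-x)^(t/2) *)
Definition P_term (ch : Tree) (x : R) (t : nat) : R :=
  first_return ch t * (sqrt (1 - x)) ^ t.

(* Since the root has one child s_1, P_tau(x) = sum_m h_m (1-x)^((m+1)/2) where
   h_m is the probability that the walk from s_1 hits the root at time m.  We
   keep only the paths staying in the hull bar B_R (killing the walk when it
   leaves) and argue with three functions on the tree:
   - the spine potential V = 1 - k/(R+1) (k the spine depth), harmonic for the
     killed walk, so that P(return within n steps) >= V(s_1) - P(alive at n);
   - a Lyapunov function W (sum of 2|subtree|-1 along the path from the root),
     with 1 + mean W <= W on the hull, so that n P(alive at n) <= W(s_1) and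
     E[return time] <= W(s_1) + 1, where W(s_1) = 2|bar B_R| - 1;
   - Bernoulli's inequality (1-x)^k >= 1 - kx on the (even) return times. *)

From Stdlib Require Import Reals List Lia Lra.
Import ListNotations.
Open Scope R_scope.

Lemma sumR_app (l1 l2 : list R) : sumR (l1 ++ l2) = sumR l1 + sumR l2.
Proof. induction l1 as [|a l IH]; simpl; [lra | rewrite IH; lra]. Qed.

Lemma sumR_map_plus {A} (f g : A -> R) (l : list A) :
  sumR (map (fun w => f w + g w) l) = sumR (map f l) + sumR (map g l).
Proof. induction l as [|a l IH]; simpl; [lra | rewrite IH; lra]. Qed.

Lemma sumR_map_scal {A} (c : R) (f : A -> R) (l : list A) :
  sumR (map (fun w => c * f w) l) = c * sumR (map f l).
Proof. induction l as [|a l IH]; simpl; [lra | rewrite IH; lra]. Qed.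

Lemma sumR_map_div {A} (f : A -> R) (d : R) (l : list A) :
  sumR (map (fun w => f w / d) l) = sumR (map f l) / d.
Proof. induction l as [|a l IH]; simpl; unfold Rdiv in *; [lra | rewrite IH; lra]. Qed.

Lemma sumR_map_const {A} (c : R) (l : list A) :
  sumR (map (fun _ => c) l) = INR (length l) * c.
Proof. induction l as [|a l IH]; simpl length; rewrite ?S_INR; simpl; [lra | rewrite IH; lra]. Qed.

Lemma sumR_map_le {A} (f g : A -> R) (l : list A) :
  (forall w, In w l -> f w <= g w) -> sumR (map f l) <= sumR (map g l).
Proof.
  induction l as [|a l IH]; simpl; intros H; [lra|].
  pose proof (H a (or_introl eq_refl)). pose proof (IH (fun w h => H w (or_intror h))). lra.
Qed.

Lemma sumR_map_ext {A} (f g : A -> R) (l : list A) :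
  (forall w, In w l -> f w = g w) -> sumR (map f l) = sumR (map g l).
Proof.
  induction l as [|a l IH]; simpl; intros H; [lra|].
  rewrite (H a (or_introl eq_refl)), (IH (fun w h => H w (or_intror h))); lra.
Qed.

Lemma sumR_map_nonzero {A} (f : A -> R) (l : list A) :
  sumR (map f l) <> 0 -> exists w, In w l /\ f w <> 0.
Proof.
  induction l as [|a l IH]; simpl; intros H; [lra|].
  destruct (Req_dec (f a) 0) as [E|E]; [|eauto].
  destruct IH as [w [Hw Hf]]; [rewrite E in H; lra | eauto].
Qed.

Lemma sumR_indicator (a : nat) (c : R) (n : nat) : (a < n)%nat ->
  sumR (map (fun j => if Nat.eqb j a then c else 0) (seq 0 n)) = c.
Proof.
  induction n as [|n IH]; intros H; [lia|].
  rewrite seq_S, map_app, sumR_app. simpl.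
  destruct (Nat.eqb_spec n a) as [->|E]; [|rewrite IH by lia; lra].
  rewrite (sumR_map_ext _ (fun _ => 0)), sumR_map_const; [lra|].
  intros w Hw. apply in_seq in Hw. destruct (Nat.eqb_spec w a); [lia | reflexivity].
Qed.

Lemma INR_list_sum {A} (f : A -> nat) (l : list A) :
  INR (list_sum (map f l)) = sumR (map (fun c => INR (f c)) l).
Proof. induction l as [|a l IH]; simpl; auto. rewrite plus_INR, IH. reflexivity. Qed.

Fixpoint psum (f : nat -> R) (n : nat) : R :=
  match n with O => 0 | S k => psum f k + f k end.

Lemma psum_shift (f : nat -> R) (n : nat) : psum f (S n) = f O + psum (fun m => f (S m)) n.
Proof. induction n as [|n IH]; simpl in *; [lra | rewrite IH; lra]. Qed.

Lemma psum_ext (f g : nat -> R) (n : nat) :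
  (forall m, (m < n)%nat -> f m = g m) -> psum f n = psum g n.
Proof. induction n as [|n IH]; simpl; intros H; [lra|]. rewrite IH, H; [lra | lia | auto]. Qed.

Lemma psum_le (f g : nat -> R) (n : nat) :
  (forall m, (m < n)%nat -> f m <= g m) -> psum f n <= psum g n.
Proof.
  induction n as [|n IH]; simpl; intros H; [lra|].
  pose proof (H n ltac:(lia)). pose proof (IH ltac:(auto)). lra.
Qed.

Lemma psum_const (c : R) (n : nat) : psum (fun _ => c) n = INR n * c.
Proof. induction n as [|n IH]; simpl psum; rewrite ?S_INR; simpl; [lra | rewrite IH; lra]. Qed.

Lemma psum_plus (f g : nat -> R) (n : nat) :
  psum (fun m => f m + g m) n = psum f n + psum g n.
Proof. induction n as [|n IH]; simpl; [lra | rewrite IH; lra]. Qed.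

Lemma psum_scal (c : R) (f : nat -> R) (n : nat) :
  psum (fun m => c * f m) n = c * psum f n.
Proof. induction n as [|n IH]; simpl; [lra | rewrite IH; lra]. Qed.

Lemma psum_sumR {A} (F : nat -> A -> R) (l : list A) (n : nat) :
  psum (fun m => sumR (map (F m) l)) n = sumR (map (fun w => psum (fun m => F m w) n) l).
Proof.
  induction n as [|n IH]; simpl.
  - rewrite sumR_map_const. lra.
  - rewrite IH, <- sumR_map_plus. reflexivity.
Qed.

(* Stdlib's sum_f_R0 f n has n+1 terms. *)
Lemma sum_f_R0_psum (f : nat -> R) (n : nat) : sum_f_R0 f n = psum f (S n).
Proof. induction n as [|n IH]; simpl in *; [lra | rewrite IH; reflexivity]. Qed.

Section RandomWalk.

Variable ch : Tree.

Definition avg (g : list nat -> R) (u : list nat) : R :=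
  sumR (map (fun w => g w / INR (deg ch u)) (nbrs ch u)).

Lemma hit_cons (m i : nat) (p : list nat) : hit ch (S m) (i :: p) = avg (hit ch m) (i :: p).
Proof. reflexivity. Qed.

Lemma deg_pos (i : nat) (p : list nat) : 0 < INR (deg ch (i :: p)).
Proof. apply lt_0_INR. unfold deg. lia. Qed.

Lemma avg_eq (g : list nat -> R) (u : list nat) :
  avg g u = sumR (map g (nbrs ch u)) / INR (deg ch u).
Proof. apply sumR_map_div. Qed.

Lemma avg_ext (f g : list nat -> R) (u : list nat) :
  (forall w, In w (nbrs ch u) -> f w = g w) -> avg f u = avg g u.
Proof. intros H. unfold avg. apply sumR_map_ext. intros w Hw. rewrite H; auto. Qed.

Lemma avg_le (f g : list nat -> R) (i : nat) (p : list nat) :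
  (forall w, In w (nbrs ch (i :: p)) -> f w <= g w) -> avg f (i :: p) <= avg g (i :: p).
Proof.
  intros H. rewrite !avg_eq. unfold Rdiv. apply Rmult_le_compat_r.
  - left. apply Rinv_0_lt_compat, deg_pos.
  - apply sumR_map_le; auto.
Qed.

Lemma avg_const (c : R) (i : nat) (p : list nat) : avg (fun _ => c) (i :: p) = c.
Proof.
  rewrite avg_eq, sumR_map_const.
  replace (length (nbrs ch (i :: p))) with (deg ch (i :: p)).
  - pose proof (deg_pos i p). field. lra.
  - unfold nbrs, children, deg. rewrite length_app, length_map, length_seq. simpl. lia.
Qed.

Lemma avg_plus (f g : list nat -> R) (u : list nat) :
  avg (fun w => f w + g w) u = avg f u + avg g u.
Proof. rewrite !avg_eq, sumR_map_plus. unfold Rdiv. lra. Qed.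

Lemma avg_scal (c : R) (f : list nat -> R) (u : list nat) :
  avg (fun w => c * f w) u = c * avg f u.
Proof. rewrite !avg_eq, sumR_map_scal. unfold Rdiv. lra. Qed.

Lemma psum_avg (F : nat -> list nat -> R) (u : list nat) (n : nat) :
  psum (fun m => avg (F m) u) n = avg (fun w => psum (fun m => F m w) n) u.
Proof.
  unfold avg. rewrite (psum_sumR (fun m w => F m w / INR (deg ch u))).
  apply sumR_map_ext. intros w _.
  unfold Rdiv. rewrite Rmult_comm, <- psum_scal.
  apply psum_ext. intros m _. ring.
Qed.

Lemma hit_nonneg (n : nat) (u : list nat) : 0 <= hit ch n u.
Proof.
  revert u; induction n as [|n IH]; intros [|i p]; simpl hit; try lra.
  rewrite <- (avg_const 0 i p). apply avg_le. auto.
Qed.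

Lemma hit_psum_le1 (n : nat) (u : list nat) : psum (fun m => hit ch m u) n <= 1.
Proof.
  revert u; induction n as [|n IH]; intros u; [simpl; lra|].
  rewrite psum_shift. destruct u as [|i p].
  - rewrite (psum_ext _ (fun _ => 0)), psum_const by reflexivity. simpl. lra.
  - rewrite (psum_ext _ (fun m => avg (hit ch m) (i :: p))), psum_avg by reflexivity.
    pose proof (avg_le _ (fun _ => 1) i p (fun w _ => IH w)) as Hle.
    rewrite avg_const in Hle. simpl hit. lra.
Qed.

Lemma first_return_S (m : nat) : ch [] = 1%nat -> first_return ch (S m) = hit ch m [0%nat].
Proof. intros H. unfold first_return, nbrs, children, deg. rewrite H. simpl. field. Qed.

Lemma first_return_nonneg (t : nat) : ch [] = 1%nat -> 0 <= first_return ch t.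
Proof. intros H. destruct t; [simpl; lra|]. rewrite first_return_S; auto. apply hit_nonneg. Qed.

Definition is_vertex (u : list nat) : Prop := In u (level ch (length u)).

Lemma is_vertex_nbrs (u w : list nat) : is_vertex u -> In w (nbrs ch u) -> is_vertex w.
Proof.
  unfold is_vertex, nbrs, children. intros Hu Hw. apply in_app_or in Hw. destruct Hw as [Hw|Hw].
  - apply in_map_iff in Hw. destruct Hw as [j [<- Hj]].
    simpl. apply in_flat_map. exists u. split; auto. exact (in_map (fun i => i :: u) _ _ Hj).
  - destruct u as [|i p]; [destruct Hw|]. destruct Hw as [<-|[]].
    simpl in Hu. apply in_flat_map in Hu. destruct Hu as [v [Hv Hc]].
    apply in_map_iff in Hc. destruct Hc as [j [E _]]. injection E as _ ->. auto.
Qed.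

Lemma root_single_child : root_deg_one ch -> ch [] = 1%nat.
Proof. unfold root_deg_one, deg. lia. Qed.

Lemma is_vertex_first : ch [] = 1%nat -> is_vertex [0%nat].
Proof. intros Hch. unfold is_vertex. simpl. unfold children. rewrite Hch. simpl. auto. Qed.

End RandomWalk.

Section SpineDepth.

Variable sp : nat -> nat.

(* [spine_depth u] is the index k of the last spine vertex s_k on the path
   from the root to [u]; the hull bar B_R is {u | spine_depth u <= R}. *)
Fixpoint spine_depth (u : list nat) : nat :=
  match u with
  | [] => O
  | i :: v => if andb (Nat.eqb (spine_depth v) (length v)) (Nat.eqb i (sp (length v)))
              then S (length v) else spine_depth v
  end.

Lemma spine_depth_le (u : list nat) : (spine_depth u <= length u)%nat.
Proof. induction u; simpl; [lia|]. destruct andb; lia. Qed.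

Lemma ray_length (k : nat) : length (ray sp k) = k.
Proof. induction k; simpl; lia. Qed.

Lemma spine_depth_ray (k : nat) : spine_depth (ray sp k) = k.
Proof. induction k as [|k IH]; simpl; auto. rewrite ray_length, IH, !Nat.eqb_refl. reflexivity. Qed.

Lemma spine_depth_full (v : list nat) : spine_depth v = length v -> v = ray sp (length v).
Proof.
  induction v as [|a v IH]; simpl; auto. intro H. pose proof (spine_depth_le v).
  destruct (Nat.eqb_spec (spine_depth v) (length v)), (Nat.eqb_spec a (sp (length v)));
    simpl in H; try lia.
  subst. rewrite <- IH; auto.
Qed.

Lemma spine_depth_mono (i : nat) (v : list nat) : (spine_depth v <= spine_depth (i :: v))%nat.
Proof. simpl. pose proof (spine_depth_le v). destruct andb; lia. Qed.

Lemma in_subtree_cons (a : list nat) (i : nat) (v : list nat) :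
  in_subtree a (i :: v) =
  orb (if list_eq_dec Nat.eq_dec (i :: v) a then true else false) (in_subtree a v).
Proof.
  unfold in_subtree. simpl length.
  destruct (Nat.leb_spec (length a) (S (length v))).
  - destruct (Nat.eq_dec (length a) (S (length v))) as [E|E].
    + rewrite E, Nat.sub_diag. simpl skipn.
      destruct (Nat.leb_spec (S (length v)) (length v)); [lia|].
      destruct list_eq_dec; reflexivity.
    + replace (S (length v) - length a)%nat with (S (length v - length a)) by lia. simpl skipn.
      destruct (Nat.leb_spec (length a) (length v)); [|lia].
      destruct (list_eq_dec Nat.eq_dec (i :: v) a) as [<-|]; [simpl in E; lia | reflexivity].
  - destruct (Nat.leb_spec (length a) (length v)); [lia|].
    destruct (list_eq_dec Nat.eq_dec (i :: v) a) as [<-|]; [simpl in *; lia | reflexivity].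
Qed.

Lemma in_subtree_spine (Rr : nat) (u : list nat) :
  in_subtree (ray sp (S Rr)) u = Nat.leb (S Rr) (spine_depth u).
Proof.
  induction u as [|i v IH]; [reflexivity|].
  rewrite in_subtree_cons, IH. pose proof (spine_depth_le v). simpl spine_depth.
  destruct (list_eq_dec Nat.eq_dec (i :: v) (ray sp (S Rr))) as [E|E].
  - simpl in E. injection E as -> ->.
    rewrite spine_depth_ray, ray_length, !Nat.eqb_refl. simpl. symmetry. apply Nat.leb_refl.
  - rewrite Bool.orb_false_l.
    destruct (Nat.eqb_spec (spine_depth v) (length v)) as [E1|E1],
             (Nat.eqb_spec i (sp (length v))) as [E2|E2]; simpl andb; auto.
    pose proof (spine_depth_full v E1) as Hv.
    destruct (Nat.leb_spec (S Rr) (spine_depth v)), (Nat.leb_spec (S Rr) (S (length v)));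
      auto; try lia.
    exfalso. apply E. assert (length v = Rr) as <- by lia. subst i. simpl. congruence.
Qed.

Lemma in_hull_depth (Rr : nat) (u : list nat) :
  in_hull sp Rr u = Nat.leb (spine_depth u) Rr.
Proof.
  unfold in_hull. rewrite in_subtree_spine.
  destruct (Nat.leb_spec (S Rr) (spine_depth u)), (Nat.leb_spec (spine_depth u) Rr); auto; lia.
Qed.

End SpineDepth.

Lemma ray_start (ch : Tree) (sp : nat -> nat) : is_ray ch sp -> ch [] = 1%nat -> sp 0%nat = 0%nat.
Proof. intros Hray Hch. pose proof (Hray 0%nat) as H0. simpl in H0. lia. Qed.

Section HullWalk.

Variable ch : Tree.
Variable sp : nat -> nat.
Variable Rr : nat.

(* The walk moves on from the non-root vertices of the hull and is killed
   (or, at the root, stopped) everywhere else. *)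
Definition inner (u : list nat) : bool :=
  match u with [] => false | _ => in_hull sp Rr u end.

(* [hull_hit n u]: probability that the walk from [u] first hits the root at
   time [n] without leaving the hull before. *)
Fixpoint hull_hit (n : nat) (u : list nat) : R :=
  match n with
  | O => match u with [] => 1 | _ => 0 end
  | S m => if inner u then avg ch (hull_hit m) u else 0
  end.

Lemma hull_hit_nonneg (n : nat) (u : list nat) : 0 <= hull_hit n u.
Proof.
  revert u; induction n as [|n IH]; intros [|i p]; simpl; try lra.
  destruct (in_hull sp Rr (i :: p)); [|lra].
  rewrite <- (avg_const ch 0 i p). apply avg_le. auto.
Qed.

Lemma hull_hit_le_hit (n : nat) (u : list nat) : hull_hit n u <= hit ch n u.
Proof.
  revert u; induction n as [|n IH]; intros [|i p]; simpl hull_hit; try (simpl; lra).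
  simpl inner. destruct (in_hull sp Rr (i :: p)).
  - rewrite hit_cons. apply avg_le. auto.
  - apply hit_nonneg.
Qed.

Lemma hull_hit_parity (n : nat) (u : list nat) :
  hull_hit n u <> 0 -> Nat.even (n + length u) = true.
Proof.
  revert u; induction n as [|n IH]; intros u H; simpl in H.
  - destruct u; [reflexivity | lra].
  - destruct (inner u) eqn:Hin; [|lra]. destruct u as [|i p]; [discriminate|].
    rewrite avg_eq in H.
    assert (Hs : sumR (map (hull_hit n) (nbrs ch (i :: p))) <> 0)
      by (intro E; rewrite E in H; unfold Rdiv in H; lra).
    destruct (sumR_map_nonzero _ _ Hs) as [w [Hw Hh]]. apply IH in Hh.
    unfold nbrs, children in Hw. apply in_app_or in Hw. destruct Hw as [Hw|[<-|[]]].
    + apply in_map_iff in Hw. destruct Hw as [j [<- _]]. simpl length in Hh |- *.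
      replace (S n + S (length p))%nat with (n + S (S (length p)))%nat by lia. exact Hh.
    + simpl length. replace (S n + S (length p))%nat with (S (S (n + length p))) by lia.
      rewrite Nat.even_succ_succ. exact Hh.
Qed.

(* The potential 1 - k/(R+1) of the spine depth k: it is 1 at the root,
   vanishes outside the hull, and is harmonic at the inner vertices. *)
Definition spine_potential (u : list nat) : R :=
  if in_hull sp Rr u then 1 - INR (spine_depth sp u) / INR (S Rr) else 0.

Lemma spine_potential_eq (u : list nat) : (spine_depth sp u <= S Rr)%nat ->
  spine_potential u = 1 - INR (spine_depth sp u) / INR (S Rr).
Proof.
  intros H. unfold spine_potential. rewrite in_hull_depth.
  destruct (Nat.leb_spec (spine_depth sp u) Rr); auto.
  assert (spine_depth sp u = S Rr) as -> by lia. field. apply not_0_INR. lia.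
Qed.

Lemma spine_potential_first : sp 0%nat = 0%nat -> (1 <= Rr)%nat ->
  spine_potential [0%nat] = 1 - 1 / (INR Rr + 1).
Proof.
  intros Hsp HR. rewrite spine_potential_eq by (simpl; rewrite Hsp; simpl; lia).
  simpl spine_depth. rewrite Hsp. cbn [Nat.eqb andb length]. rewrite INR_1, (S_INR Rr).
  reflexivity.
Qed.

Lemma spine_potential_le1 (u : list nat) : spine_potential u <= 1.
Proof.
  unfold spine_potential. destruct in_hull; [|lra].
  assert (0 <= INR (spine_depth sp u) / INR (S Rr)); [|lra].
  unfold Rdiv. apply Rmult_le_pos; [apply pos_INR | left; apply Rinv_0_lt_compat, lt_0_INR; lia].
Qed.

(* Harmonicity: off the spine all neighbours share the spine depth; on the
   spine the deeper spine child and the parent compensate each other. *)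
Lemma spine_potential_harmonic (i : nat) (p : list nat) :
  is_ray ch sp -> inner (i :: p) = true ->
  avg ch spine_potential (i :: p) = spine_potential (i :: p).
Proof.
  intros Hray Hin. unfold inner in Hin. rewrite in_hull_depth in Hin. apply Nat.leb_le in Hin.
  rewrite avg_eq. unfold nbrs, children, deg. rewrite map_app, map_map, sumR_app. simpl sumR.
  rewrite Nat.add_1_r, S_INR. pose proof (pos_INR (ch (i :: p))).
  remember (i :: p) as u eqn:Hu. remember (spine_depth sp u) as k eqn:Hkdef.
  assert (Hlen : length u = S (length p)) by (subst u; reflexivity).
  assert (Hk : k = if andb (Nat.eqb (spine_depth sp p) (length p)) (Nat.eqb i (sp (length p)))
                   then S (length p) else spine_depth sp p) by (subst; reflexivity).
  assert (Hchild : forall j, spine_depth sp (j :: u) =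
            if andb (Nat.eqb k (length u)) (Nat.eqb j (sp (length u))) then S (length u) else k)
    by (intros j; subst k; reflexivity).
  pose proof (spine_depth_le sp p).
  destruct (Nat.eq_dec k (length u)) as [E|E].
  - (* on the spine: the spine child is one unit deeper, the parent one unit shallower *)
    assert (Hp : spine_depth sp p = length p).
    { rewrite Hk, Hlen in E. destruct (Nat.eqb_spec (spine_depth sp p) (length p)); auto.
      simpl in E. lia. }
    assert (Hlt : (sp k < ch u)%nat).
    { assert (u = ray sp k) as -> by (rewrite E; apply spine_depth_full; congruence).
      apply Hray. }
    assert (Hj : forall j, spine_depth sp (j :: u) = if Nat.eqb j (sp k) then S k else k)
      by (intros j; rewrite Hchild, <- E, Nat.eqb_refl; reflexivity).
    rewrite (sumR_map_ext _ (fun j => spine_potential u +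
               (if Nat.eqb j (sp k) then - / INR (S Rr) else 0))).
    2:{ intros j _.
        assert (Hjle : (spine_depth sp (j :: u) <= S Rr)%nat)
          by (rewrite Hj; destruct (j =? sp k)%nat; lia).
        rewrite !spine_potential_eq, Hj, <- Hkdef by lia.
        destruct (Nat.eqb j (sp k)); rewrite ?S_INR; field;
          rewrite <- S_INR; apply not_0_INR; lia. }
    rewrite sumR_map_plus, sumR_map_const, length_seq, sumR_indicator by exact Hlt.
    rewrite !spine_potential_eq, <- Hkdef, Hp by lia.
    replace k with (S (length p)) by lia. rewrite !S_INR.
    pose proof (pos_INR Rr). field. split; lra.
  - (* off the spine: all neighbours have the same spine depth *)
    assert (Hp : spine_depth sp p = k).
    { rewrite Hlen in E. destruct (Nat.eqb_spec (spine_depth sp p) (length p)),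
        (Nat.eqb_spec i (sp (length p))); simpl in Hk; lia. }
    rewrite (sumR_map_ext _ (fun _ => spine_potential u)).
    2:{ intros j _.
        assert (Hjle : (spine_depth sp (j :: u) <= S Rr)%nat)
          by (rewrite Hchild; destruct (Nat.eqb_spec k (length u)); simpl; lia).
        rewrite !spine_potential_eq, Hchild, <- Hkdef by lia.
        destruct (Nat.eqb_spec k (length u)); [lia | reflexivity]. }
    rewrite sumR_map_const, length_seq, (spine_potential_eq u), (spine_potential_eq p) by lia.
    rewrite Hp, <- Hkdef, S_INR. pose proof (pos_INR Rr). field. split; lra.
Qed.

Definition hull_return (n : nat) (u : list nat) : R := psum (fun m => hull_hit m u) n.

(* Probability that the walk from [u] makes [n] steps without being killed
   or stopped. *)
Fixpoint survival (n : nat) (u : list nat) : R :=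
  match n with
  | O => 1
  | S m => if inner u then avg ch (survival m) u else 0
  end.

Definition return_time (n : nat) (u : list nat) : R :=
  psum (fun m => INR (S m) * hull_hit m u) n.

Lemma hull_return_root (n : nat) : hull_return (S n) [] = 1.
Proof.
  unfold hull_return. rewrite psum_shift, (psum_ext _ (fun _ => 0)), psum_const by reflexivity.
  simpl. lra.
Qed.

Lemma hull_return_inner (n : nat) (u : list nat) : inner u = true ->
  hull_return (S n) u = avg ch (hull_return n) u.
Proof.
  intros Hin. unfold hull_return. rewrite psum_shift, <- psum_avg.
  destruct u as [|i p]; [discriminate|]. simpl hull_hit at 1.
  rewrite Rplus_0_l. apply psum_ext. intros m _. cbn [hull_hit]. rewrite Hin. reflexivity.
Qed.

Lemma hull_return_outer (n : nat) (i : nat) (p : list nat) : inner (i :: p) = false ->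
  hull_return n (i :: p) = 0.
Proof.
  intros Hout. unfold hull_return.
  rewrite (psum_ext _ (fun _ => 0)), psum_const; [lra|].
  intros [|m] _; [reflexivity|]. cbn [hull_hit]. rewrite Hout. reflexivity.
Qed.

Lemma hull_return_le1 (n : nat) (u : list nat) : hull_return n u <= 1.
Proof.
  eapply Rle_trans; [|apply (hit_psum_le1 ch n u)].
  apply psum_le. intros m _. apply hull_hit_le_hit.
Qed.

Lemma survival_nonneg (n : nat) (u : list nat) : 0 <= survival n u.
Proof.
  revert u; induction n as [|n IH]; intros u; simpl; [lra|].
  destruct (inner u) eqn:Hin; [|lra]. destruct u as [|i p]; [discriminate|].
  rewrite <- (avg_const ch 0 i p). apply avg_le. auto.
Qed.

Lemma survival_S_le (n : nat) (u : list nat) : survival (S n) u <= survival n u.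
Proof.
  revert u; induction n as [|n IH]; intros [|i p]; cbn [survival inner];
    try destruct (in_hull sp Rr (i :: p)); try lra; try apply survival_nonneg.
  - rewrite avg_const. lra.
  - exact (avg_le ch _ _ i p (fun w _ => IH w)).
Qed.

Lemma survival_antitone (m n : nat) (u : list nat) : (m <= n)%nat -> survival n u <= survival m u.
Proof.
  induction 1 as [|n _ IH]; [lra|]. pose proof (survival_S_le n u). lra.
Qed.

(* Escape estimate: the walk from [u] either returns to the root inside the
   hull or is still alive, with the harmonic potential as the weight. *)
Lemma hull_return_ge (n : nat) (u : list nat) : is_ray ch sp ->
  spine_potential u - survival n u <= hull_return n u.
Proof.
  intros Hray. revert u; induction n as [|n IH]; intros u.
  - unfold hull_return. simpl. pose proof (spine_potential_le1 u). lra.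
  - destruct u as [|i p].
    + rewrite hull_return_root. pose proof (survival_nonneg (S n) []).
      pose proof (spine_potential_le1 []). lra.
    + destruct (inner (i :: p)) eqn:Hin.
      * rewrite hull_return_inner, <- spine_potential_harmonic by auto.
        cbn [survival]. rewrite Hin.
        assert (Hle : avg ch (fun w => spine_potential w + (-1) * survival n w) (i :: p)
                      <= avg ch (hull_return n) (i :: p))
          by (apply avg_le; intros w _; pose proof (IH w); lra).
        rewrite avg_plus, avg_scal in Hle. lra.
      * rewrite hull_return_outer by auto. cbn [survival]. rewrite Hin.
        unfold spine_potential. simpl in Hin. rewrite Hin. lra.
Qed.

(* One-step recursion: a step adds one unit to every remaining return time. *)
Lemma return_time_inner (n i : nat) (p : list nat) : inner (i :: p) = true ->
  return_time (S n) (i :: p) = avg ch (fun w => return_time n w + hull_return n w) (i :: p).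
Proof.
  intros Hin. unfold return_time, hull_return.
  rewrite psum_shift,
    (psum_ext _ (fun m => avg ch (fun w => INR (S (S m)) * hull_hit m w) (i :: p))).
  2:{ intros m _. cbn [hull_hit]. rewrite Hin, avg_scal. reflexivity. }
  rewrite psum_avg. cbn [hull_hit]. rewrite Rmult_0_r, Rplus_0_l.
  apply avg_ext. intros w _. rewrite <- psum_plus. apply psum_ext. intros m _.
  rewrite (S_INR (S m)). ring.
Qed.

Section Supersolution.

(* A nonnegative function decreasing by at least one in mean at every inner
   vertex bounds the expected lifetime of the walk. *)
Variable W : list nat -> R.
Hypothesis W_nonneg : forall u, 0 <= W u.
Hypothesis W_super : forall i p, is_vertex ch (i :: p) -> inner (i :: p) = true ->
  1 + avg ch W (i :: p) <= W (i :: p).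

Lemma survival_psum_le (n : nat) (u : list nat) : is_vertex ch u ->
  psum (fun m => survival (S m) u) n <= W u.
Proof.
  revert u; induction n as [|n IH]; intros u Hu; [simpl; apply W_nonneg|].
  rewrite psum_shift. destruct u as [|i p]; [|destruct (inner (i :: p)) eqn:Hin].
  - rewrite (psum_ext _ (fun _ => 0)), psum_const by reflexivity.
    pose proof (W_nonneg []). simpl. lra.
  - assert (E : forall m, survival (S m) (i :: p) = avg ch (survival m) (i :: p))
      by (intros; cbn [survival]; rewrite Hin; reflexivity).
    rewrite E, (psum_ext _ (fun m => avg ch (survival (S m)) (i :: p))), psum_avg
      by (intros; apply E).
    change (survival 0) with (fun _ : list nat => 1). rewrite avg_const.
    assert (avg ch (fun w => psum (fun m => survival (S m) w) n) (i :: p) <= avg ch W (i :: p))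
      by (apply avg_le; intros w Hw; apply IH; eapply is_vertex_nbrs; eauto).
    pose proof (W_super i p Hu Hin). lra.
  - rewrite (psum_ext _ (fun _ => 0)), psum_const
      by (intros; cbn [survival]; rewrite Hin; reflexivity).
    cbn [survival]. rewrite Hin. pose proof (W_nonneg (i :: p)). lra.
Qed.

Lemma survival_le (n : nat) (u : list nat) : is_vertex ch u -> INR n * survival n u <= W u.
Proof.
  intros Hu. eapply Rle_trans; [|apply (survival_psum_le n u Hu)].
  rewrite <- psum_const. apply psum_le. intros m Hm. apply survival_antitone. lia.
Qed.

Lemma return_time_le (n : nat) (u : list nat) : is_vertex ch u ->
  return_time n u <= W u + 1.
Proof.
  revert u; induction n as [|n IH]; intros u Hu.
  - unfold return_time. simpl. pose proof (W_nonneg u). lra.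
  - destruct u as [|i p]; [|destruct (inner (i :: p)) eqn:Hin].
    + unfold return_time. rewrite psum_shift, (psum_ext _ (fun _ => 0)), psum_const
        by (intros; cbn [hull_hit inner]; lra).
      pose proof (W_nonneg []). simpl. lra.
    + rewrite return_time_inner by exact Hin.
      assert (Hle : avg ch (fun w => return_time n w + hull_return n w) (i :: p)
                    <= avg ch (fun w => W w + 2) (i :: p)).
      { apply avg_le. intros w Hw. pose proof (IH w (is_vertex_nbrs ch _ _ Hu Hw)).
        pose proof (hull_return_le1 n w). lra. }
      rewrite (avg_plus ch W (fun _ => 2)), avg_const in Hle. pose proof (W_super i p Hu Hin). lra.
    + unfold return_time. rewrite (psum_ext _ (fun _ => 0)), psum_const.
      * pose proof (W_nonneg (i :: p)). lra.
      * intros [|m] _; cbn [hull_hit]; [lra | rewrite Hin; lra].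
Qed.

End Supersolution.

End HullWalk.

Lemma flat_map_flat_map {A B C} (f : A -> list B) (g : B -> list C) (l : list A) :
  flat_map g (flat_map f l) = flat_map (fun a => flat_map g (f a)) l.
Proof. induction l as [|a l IH]; simpl; auto. rewrite flat_map_app, IH. reflexivity. Qed.

Lemma length_filter_flat_map {A B} (P : B -> bool) (f : A -> list B) (l : list A) :
  length (filter P (flat_map f l)) = list_sum (map (fun c => length (filter P (f c))) l).
Proof. induction l as [|a l IH]; simpl; auto. rewrite filter_app, length_app, IH. reflexivity. Qed.

Lemma filter_all_false {A} (P : A -> bool) (l : list A) :
  (forall x, In x l -> P x = false) -> filter P l = [].
Proof. induction l as [|a l IH]; simpl; intros H; auto. rewrite H by auto. apply IH. auto. Qed.

Lemma length_filter_zero {A} (P : A -> bool) (l : list A) (x : A) :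
  length (filter P l) = 0%nat -> In x l -> P x = false.
Proof.
  intros H Hx. destruct (P x) eqn:E; auto.
  assert (In x (filter P l)) as Hf by (apply filter_In; auto).
  destruct (filter P l); [destruct Hf | discriminate].
Qed.

Lemma list_sum_map_add {A} (f g : A -> nat) (l : list A) :
  list_sum (map (fun c => f c + g c)%nat l) = (list_sum (map f l) + list_sum (map g l))%nat.
Proof. induction l as [|a l IH]; simpl; auto. rewrite IH. lia. Qed.

Section HullSize.

Variable ch : Tree.
Variable sp : nat -> nat.
Variable Rr : nat.

Fixpoint descendants (u : list nat) (j : nat) : list (list nat) :=
  match j with O => [u] | S k => flat_map (children ch) (descendants u k) end.

Lemma level_descendants (n : nat) : level ch n = descendants [] n.
Proof. induction n as [|n IH]; simpl; auto. rewrite IH. reflexivity. Qed.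

Lemma descendants_S (u : list nat) (j : nat) :
  descendants u (S j) = flat_map (fun c => descendants c j) (children ch u).
Proof.
  induction j as [|j IH].
  - simpl. rewrite app_nil_r. induction (children ch u) as [|c l IHl]; simpl; auto.
    rewrite <- IHl. reflexivity.
  - change (descendants u (S (S j))) with (flat_map (children ch) (descendants u (S j))).
    rewrite IH, flat_map_flat_map. reflexivity.
Qed.

Lemma descendants_level (u : list nat) (j : nat) (w : list nat) :
  is_vertex ch u -> In w (descendants u j) -> In w (level ch (length u + j)).
Proof.
  intros Hu. revert w. induction j as [|j IH]; intros w Hw.
  - destruct Hw as [<-|[]]. rewrite Nat.add_0_r. exact Hu.
  - simpl in Hw. apply in_flat_map in Hw. destruct Hw as [v [Hv Hc]].
    rewrite Nat.add_succ_r. simpl. apply in_flat_map. eauto.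
Qed.

Lemma descendants_spine_depth (u : list nat) (j : nat) (w : list nat) :
  In w (descendants u j) -> (spine_depth sp u <= spine_depth sp w)%nat.
Proof.
  revert w. induction j as [|j IH]; intros w Hw.
  - destruct Hw as [<-|[]]. lia.
  - simpl in Hw. apply in_flat_map in Hw. destruct Hw as [v [Hv Hc]].
    unfold children in Hc. apply in_map_iff in Hc. destruct Hc as [i [<- _]].
    pose proof (spine_depth_mono sp i v). pose proof (IH v Hv). lia.
Qed.

Definition hull_count (u : list nat) (j : nat) : nat :=
  length (filter (in_hull sp Rr) (descendants u j)).

Lemma hull_count_S (u : list nat) (j : nat) :
  hull_count u (S j) = list_sum (map (fun c => hull_count c j) (children ch u)).
Proof. unfold hull_count. rewrite descendants_S, length_filter_flat_map. reflexivity. Qed.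

Lemma hull_count_outside (u : list nat) (j : nat) :
  in_hull sp Rr u = false -> hull_count u j = 0%nat.
Proof.
  intros H. unfold hull_count. rewrite filter_all_false; auto. intros w Hw.
  pose proof (descendants_spine_depth u j w Hw).
  rewrite in_hull_depth in *. apply Nat.leb_gt in H. apply Nat.leb_gt. lia.
Qed.

Fixpoint hull_size (u : list nat) (k : nat) : nat :=
  match k with
  | O => hull_count u 0
  | S e => (hull_size u e + hull_count u (S e))%nat
  end.

Lemma hull_vertices_upto_size (d : nat) : hull_vertices_upto ch sp Rr d = hull_size [] d.
Proof.
  induction d as [|d IH]; [reflexivity|].
  change (hull_vertices_upto ch sp Rr (S d))
    with (hull_vertices_upto ch sp Rr d + length (filter (in_hull sp Rr) (level ch (S d))))%nat.
  rewrite IH, level_descendants. reflexivity.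
Qed.

Lemma hull_size_S (u : list nat) (k : nat) :
  hull_size u (S k) =
  (hull_count u 0 + list_sum (map (fun c => hull_size c k) (children ch u)))%nat.
Proof.
  induction k as [|k IH]; [simpl; rewrite hull_count_S; reflexivity|].
  change (hull_size u (S (S k))) with (hull_size u (S k) + hull_count u (S (S k)))%nat.
  rewrite IH, hull_count_S. simpl hull_size. rewrite list_sum_map_add. lia.
Qed.

Lemma hull_size_outside (u : list nat) (k : nat) : in_hull sp Rr u = false -> hull_size u k = 0%nat.
Proof. intros H. induction k; simpl; rewrite ?IHk; apply hull_count_outside; auto. Qed.

Lemma hull_size_ge1 (u : list nat) (k : nat) : in_hull sp Rr u = true -> (1 <= hull_size u k)%nat.
Proof. intros H. induction k; simpl; [|lia]. unfold hull_count. simpl. rewrite H. simpl. lia. Qed.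

Definition hull_depth_le (d0 : nat) : Prop :=
  forall w n, (d0 < n)%nat -> In w (level ch n) -> in_hull sp Rr w = false.

(* A finite hull has bounded depth: once the vertex count is stationary,
   deeper levels contain no hull vertex. *)
Lemma hull_depth_exists (N : nat) : hull_edges_eq ch sp Rr N -> exists d0, hull_depth_le d0.
Proof.
  intros [d0 H]. exists d0. intros w n Hn Hw. destruct n as [|d]; [lia|].
  pose proof (H d ltac:(lia)) as Hd. pose proof (H (S d) ltac:(lia)) as HSd.
  rewrite !hull_vertices_upto_size in *. simpl hull_size in HSd.
  apply (length_filter_zero _ (level ch (S d))); auto.
  rewrite level_descendants. fold (hull_count [] (S d)). lia.
Qed.

Section BoundedHull.

Variable d0 : nat.
Hypothesis hull_bounded : hull_depth_le d0.

Lemma hull_count_deep (u : list nat) (j : nat) :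
  is_vertex ch u -> (d0 < length u + j)%nat -> hull_count u j = 0%nat.
Proof.
  intros Hu Hj. unfold hull_count. rewrite filter_all_false; auto. intros w Hw.
  eapply hull_bounded; [exact Hj|]. eapply descendants_level; eauto.
Qed.

Definition subtree_size (u : list nat) : R := INR (hull_size u (S d0)).

Lemma subtree_size_rec (u : list nat) : is_vertex ch u ->
  subtree_size u = (if in_hull sp Rr u then 1 else 0) + sumR (map subtree_size (children ch u)).
Proof.
  intros Hu. unfold subtree_size. rewrite hull_size_S, plus_INR, INR_list_sum. f_equal.
  - unfold hull_count. simpl. destruct (in_hull sp Rr u); reflexivity.
  - apply sumR_map_ext. intros c Hc. f_equal.
    assert (is_vertex ch c) by (eapply is_vertex_nbrs; eauto; unfold nbrs; apply in_or_app; auto).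
    simpl hull_size. rewrite (hull_count_deep c (S d0)); auto. lia.
Qed.

Lemma subtree_size_ge1 (u : list nat) : in_hull sp Rr u = true -> 1 <= subtree_size u.
Proof. intros H. apply (le_INR 1). apply hull_size_ge1; auto. Qed.

Lemma subtree_size_root (N : nat) : hull_edges_eq ch sp Rr N -> subtree_size [] = INR (S N).
Proof.
  intros [d1 Hd1]. unfold subtree_size. f_equal.
  assert (Hstable : forall k, (d0 <= k)%nat -> hull_size [] k = hull_size [] d0).
  { induction 1 as [|m Hm IH]; auto. simpl. rewrite IH, (hull_count_deep [] (S m)).
    - lia.
    - unfold is_vertex. simpl. auto.
    - simpl. lia. }
  rewrite Hstable, <- (Hstable (max d0 d1)), <- hull_vertices_upto_size by lia. apply Hd1. lia.
Qed.

(* The Lyapunov function of the walk in the hull: the sum of 2|subtree| - 1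
   over the non-root vertices of the path from the root to [u]. *)
Fixpoint exit_bound (u : list nat) : R :=
  match u with
  | [] => 0
  | i :: p => if in_hull sp Rr (i :: p) then exit_bound p + 2 * subtree_size (i :: p) - 1 else 0
  end.

Lemma exit_bound_cons (i : nat) (p : list nat) : exit_bound (i :: p) =
  if in_hull sp Rr (i :: p) then exit_bound p + 2 * subtree_size (i :: p) - 1 else 0.
Proof. reflexivity. Qed.

Lemma exit_bound_nonneg (u : list nat) : 0 <= exit_bound u.
Proof.
  induction u as [|i p IH]; simpl; [lra|]. destruct (in_hull sp Rr (i :: p)) eqn:H; [|lra].
  pose proof (subtree_size_ge1 _ H). lra.
Qed.

Lemma exit_bound_super (i : nat) (p : list nat) :
  is_vertex ch (i :: p) -> inner sp Rr (i :: p) = true ->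
  1 + avg ch exit_bound (i :: p) <= exit_bound (i :: p).
Proof.
  intros Hv Hin. change (in_hull sp Rr (i :: p) = true) in Hin.
  assert (HW : exit_bound (i :: p) = exit_bound p + 2 * subtree_size (i :: p) - 1)
    by (rewrite exit_bound_cons, Hin; reflexivity).
  assert (HW1 : 1 <= exit_bound (i :: p))
    by (rewrite HW; pose proof (subtree_size_ge1 _ Hin); pose proof (exit_bound_nonneg p); lra).
  pose proof (subtree_size_rec (i :: p) Hv) as HD. rewrite Hin in HD.
  (* a child in the hull adds 2|subtree| - 1, a child outside contributes 0 *)
  assert (Hchild : sumR (map exit_bound (children ch (i :: p))) <=
     sumR (map (fun c => (exit_bound (i :: p) - 1) + 2 * subtree_size c) (children ch (i :: p)))).
  { apply sumR_map_le. intros c Hc. unfold children in Hc. apply in_map_iff in Hc.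
    destruct Hc as [j [<- _]]. rewrite (exit_bound_cons j (i :: p)).
    destruct (in_hull sp Rr (j :: i :: p)) eqn:Hc; [lra|].
    unfold subtree_size. rewrite (hull_size_outside (j :: i :: p)) by exact Hc.
    rewrite INR_0. lra. }
  rewrite sumR_map_plus, sumR_map_scal, sumR_map_const in Hchild.
  unfold children in Hchild at 2. rewrite length_map, length_seq in Hchild.
  rewrite avg_eq. unfold nbrs, deg. rewrite map_app, sumR_app. simpl sumR.
  rewrite Nat.add_1_r, S_INR. pose proof (pos_INR (ch (i :: p))).
  apply Rmult_le_reg_r with (INR (ch (i :: p)) + 1); [lra|].
  unfold Rdiv. rewrite Rmult_plus_distr_r, Rmult_assoc, Rinv_l by lra. nra.
Qed.

Lemma exit_bound_first (N : nat) : ch [] = 1%nat -> sp 0%nat = 0%nat -> (1 <= Rr)%nat ->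
  hull_edges_eq ch sp Rr N -> exit_bound [0%nat] = 2 * INR N - 1.
Proof.
  intros Hch Hsp HR Hhull.
  assert (Hin : in_hull sp Rr [0%nat] = true)
    by (rewrite in_hull_depth; simpl; rewrite Hsp; apply Nat.leb_le; exact HR).
  pose proof (subtree_size_rec [] ltac:(unfold is_vertex; simpl; auto)) as Hroot.
  rewrite (subtree_size_root N Hhull), S_INR in Hroot. unfold children in Hroot.
  rewrite Hch, (in_hull_depth sp Rr []) in Hroot.
  cbn [seq map sumR fold_right spine_depth Nat.leb] in Hroot.
  rewrite exit_bound_cons, Hin. cbn [exit_bound]. lra.
Qed.

End BoundedHull.

End HullSize.

Lemma bernoulli_ineq (x : R) (k : nat) : 0 <= x <= 1 -> 1 - INR k * x <= (1 - x) ^ k.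
Proof.
  intros Hx. induction k as [|k IH]; [simpl; lra|]. rewrite S_INR. simpl pow.
  assert ((1 - INR k * x) * (1 - x) <= (1 - x) ^ k * (1 - x)) by (apply Rmult_le_compat_r; lra).
  pose proof (pos_INR k). nra.
Qed.

(* Each return path has even length 2k, and sqrt(1-x)^(2k) = (1-x)^k >= 1 - kx. *)
Lemma hull_hit_discount (ch : Tree) (sp : nat -> nat) (Rr : nat) (x : R) (m : nat) (u : list nat) :
  0 <= x <= 1 ->
  hull_hit ch sp Rr m u * (1 - x / 2 * INR (m + length u))
  <= hit ch m u * sqrt (1 - x) ^ (m + length u).
Proof.
  intros Hx. pose proof (hull_hit_nonneg ch sp Rr m u). pose proof (hull_hit_le_hit ch sp Rr m u).
  assert (Hq : 0 <= sqrt (1 - x) ^ (m + length u)) by (apply pow_le, sqrt_pos).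
  destruct (Req_dec (hull_hit ch sp Rr m u) 0) as [E|E].
  - rewrite E. pose proof (hit_nonneg ch m u). nra.
  - apply hull_hit_parity, Nat.even_spec in E. destruct E as [k ->].
    rewrite pow_mult, <- Rsqr_pow2, Rsqr_sqrt, mult_INR by lra. simpl (INR 2).
    pose proof (bernoulli_ineq x k Hx). pose proof (pow_le (1 - x) k ltac:(lra)).
    apply Rle_trans with (hull_hit ch sp Rr m u * (1 - x) ^ k); [nra|].
    apply Rmult_le_compat_r; lra.
Qed.

Lemma P_partial_sum (ch : Tree) (x : R) (n : nat) : ch [] = 1%nat ->
  sum_f_R0 (P_term ch x) n = psum (fun m => hit ch m [0%nat] * sqrt (1 - x) ^ (m + 1)) n.
Proof.
  intros Hch. rewrite sum_f_R0_psum, psum_shift. unfold P_term at 1. simpl first_return.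
  rewrite Rmult_0_l, Rplus_0_l. apply psum_ext. intros m _.
  unfold P_term. rewrite first_return_S, Nat.add_1_r; auto.
Qed.

(* The series P_tau(x) has nonnegative terms and partial sums at most one,
   so it converges and dominates each partial sum. *)
Lemma P_converges (ch : Tree) (x : R) : ch [] = 1%nat -> 0 <= x ->
  exists P, infinite_sum (P_term ch x) P /\ forall n, sum_f_R0 (P_term ch x) n <= P.
Proof.
  intros Hch Hx.
  assert (Hq : 0 <= sqrt (1 - x) <= 1).
  { split; [apply sqrt_pos|]. rewrite <- sqrt_1 at 2. apply sqrt_le_1_alt. lra. }
  assert (Hgrow : Un_growing (sum_f_R0 (P_term ch x))).
  { intros n. simpl. assert (0 <= P_term ch x (S n)); [|lra].
    apply Rmult_le_pos; [apply first_return_nonneg; auto | apply pow_le; lra]. }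
  assert (Hub : has_ub (sum_f_R0 (P_term ch x))).
  { exists 1. intros y [n ->]. rewrite P_partial_sum by exact Hch.
    eapply Rle_trans; [|apply (hit_psum_le1 ch n [0%nat])]. apply psum_le. intros m _.
    pose proof (hit_nonneg ch m [0%nat]). pose proof (pow_le _ (m + 1) (proj1 Hq)).
    assert (sqrt (1 - x) ^ (m + 1) <= 1 ^ (m + 1)) by (apply pow_incr; lra). rewrite pow1 in *.
    nra. }
  destruct (growing_cv _ Hgrow Hub) as [P HP].
  exists P. split; [exact HP|]. intros n. exact (growing_ineq _ _ Hgrow HP n).
Qed.

Lemma P_partial_sum_lower (ch : Tree) (sp : nat -> nat) (Rr : nat) (x : R) (n : nat) :
  ch [] = 1%nat -> 0 <= x <= 1 ->
  hull_return ch sp Rr n [0%nat] - x / 2 * return_time ch sp Rr n [0%nat]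
  <= sum_f_R0 (P_term ch x) n.
Proof.
  intros Hch Hx. rewrite P_partial_sum by exact Hch.
  apply Rle_trans with (psum (fun m => hull_hit ch sp Rr m [0%nat] * (1 - x / 2 * INR (m + 1))) n).
  - unfold hull_return, return_time.
    rewrite (psum_ext (fun m => hull_hit ch sp Rr m [0%nat] * (1 - x / 2 * INR (m + 1)))
               (fun m => hull_hit ch sp Rr m [0%nat]
                         + - (x / 2) * (INR (S m) * hull_hit ch sp Rr m [0%nat]))).
    + rewrite psum_plus, psum_scal. lra.
    + intros m _. rewrite Nat.add_1_r. ring.
  - apply psum_le. intros m _. exact (hull_hit_discount ch sp Rr x m [0%nat] Hx).
Qed.

Lemma scaled_bound_le1 (a m s : R) : 0 <= a -> (2 * a + 1) * m * s <= 2 * a - 1 -> m * s <= 1.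
Proof.
  intros Ha H. apply Rmult_le_reg_l with (2 * a + 1); [lra|].
  rewrite <- Rmult_assoc. lra.
Qed.

Lemma harmonic_gap (r s : R) : 1 <= r -> r * (r + 1) * s <= 1 -> 1 / (r + 1) + s <= 1 / r.
Proof.
  intros Hr Hs. assert (s <= 1 / r - 1 / (r + 1)); [|lra].
  replace (1 / r - 1 / (r + 1)) with (1 / (r * (r + 1))) by (field; lra).
  apply Rmult_le_reg_l with (r * (r + 1)); [nra|]. unfold Rdiv. rewrite Rmult_1_l, Rinv_r by nra.
  lra.
Qed.

(* Start the walk at s_1; after n0 = (2N+1) R(R+1) steps it has
   returned to the root inside the hull with probability at least
   1 - 1/(R+1) - 1/(R(R+1)) = 1 - 1/R, and the discount (1-x)^(t/2) costs at
   most x/2 times the mean return time, which the Lyapunov function bounds by 2N. *)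
Theorem lemma3 (ch : Tree) (sp : nat -> nat) (Rr : nat) (x : R) (N : nat) :
  spine_of ch sp ->
  (1 <= Rr)%nat ->
  0 < x <= 1 ->
  hull_edges_eq ch sp Rr N ->
  exists P : R, infinite_sum (P_term ch x) P /\
    1 - 1 / INR Rr - x * INR N <= P.
Proof.
  intros [Hroot [Hray _]] HR Hx Hhull.
  pose proof (root_single_child ch Hroot) as Hch. pose proof (ray_start ch sp Hray Hch) as Hsp.
  destruct (P_converges ch x Hch ltac:(lra)) as [P [HP HPn]].
  exists P. split; [exact HP|].
  destruct (hull_depth_exists ch sp Rr N Hhull) as [d0 Hd0].
  set (W := exit_bound ch sp Rr d0).
  pose proof (exit_bound_first ch sp Rr d0 Hd0 N Hch Hsp HR Hhull : W [0%nat] = _) as HW.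
  pose proof (exit_bound_nonneg ch sp Rr d0 : forall u, 0 <= W u) as HWnn.
  pose proof (exit_bound_super ch sp Rr d0 Hd0) as HWsup.
  pose proof (is_vertex_first ch Hch) as Hv0.
  set (n0 := (S (2 * N) * (Rr * S Rr))%nat).
  assert (Hn0 : INR n0 = (2 * INR N + 1) * (INR Rr * (INR Rr + 1)))
    by (unfold n0; rewrite !mult_INR, !S_INR, mult_INR; simpl (INR 2); ring).
  pose proof (survival_le ch sp Rr W HWnn HWsup n0 [0%nat] Hv0) as Hsurv.
  rewrite Hn0, HW in Hsurv. apply scaled_bound_le1 in Hsurv; [|apply pos_INR].
  pose proof (harmonic_gap (INR Rr) _ (le_INR 1 Rr HR) Hsurv) as Hgap.
  pose proof (return_time_le ch sp Rr W HWnn HWsup n0 [0%nat] Hv0) as Htime.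
  pose proof (hull_return_ge ch sp Rr n0 [0%nat] Hray) as Hret.
  pose proof (spine_potential_first sp Rr Hsp HR) as HV.
  pose proof (P_partial_sum_lower ch sp Rr x n0 Hch ltac:(lra)) as Hlow.
  pose proof (HPn n0). nra.
Qed.
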